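(* There is a randomized algorithm in the CongestedClique model which, on a connected, simple, undirected graph $G=(V,E)$ with $n$ vertices and a given integer $\tau\ge 1$, ends with every vertex $v$ holding a walk of length $\tau'$ starting at $v$, where $\tau\le\tau'=O(\tau)$ ($\tau'$ the smallest power of $2$ that is at least $\tau$), such that each such walk is distributed as a simple random walk of length $\tau'$ on $G$ started at $v$ (walks held by different vertices need not be independent). With high probability (probability at least $1-n^{-c}$ for any desired constant $c>0$, the constants in the bounds depending on $c$), the algorithm runs in (i) $O\!\left(\frac{\tau}{n}\log\tau\log n\right)$ rounds if $\tau=\Omega(n/\log n)$, and (ii) $O(\log \tau)$ rounds if $\tau = O(n/\log n)$.
   Context: The CongestedClique model: the input is an $n$-vertex graph $G=(V,E)$ whose vertices are identified with $n$ machines with IDs $1,\dots,n$; machine $i$ initially knows vertex $i$, all edges of $G$ incident to $i$, and $n$. Computation proceeds in synchronous rounds; in each round every machine performs arbitrary local computation (using private randomness) and then sends a possibly different message of $O(\log n)$ bits to every other machine. The complexity of an algorithm is its number of rounds. A simple random walk on $G$ moves from a vertex $u$ to a uniformly random neighbor of $u$ at each step. *)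

From HB Require Import structures.
From mathcomp Require Import all_boot all_order all_algebra.
From mathcomp Require Import all_classical all_reals all_analysis.
From mathcomp Require Import Rstruct Rstruct_topology.
Set Implicit Arguments. Unset Strict Implicit. Unset Printing Implicit Defensive.
Import Order.TTheory GRing.Theory Num.Theory.

Notation RR := Rdefinitions.R.

(* A simple undirected graph on vertex set 'I_n (machine i <-> vertex i). *)
Definition simple_graph n (G : rel 'I_n) : Prop :=
  symmetric G /\ irreflexive G.
Definition connected_graph n (G : rel 'I_n) : Prop :=
  forall x y : 'I_n, connect G x y.

Definition neighbours n (G : rel 'I_n) (u : 'I_n) : {set 'I_n} :=
  [set y | G u y].
Definition degree n (G : rel 'I_n) (u : 'I_n) : nat := #|neighbours G u|.

Fixpoint rw_prob n (G : rel 'I_n) (L : nat) (u : 'I_n) (w : seq 'I_n)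
  {struct L} : RR :=
  match L, w with
  | 0, [:: x] => if x == u then 1 else 0
  | L'.+1, x :: ((y :: _) as w') =>
      if (x == u) && G u y then ((degree G u)%:R)^-1 * rw_prob G L' y w'
      else 0
  | _, _ => 0
  end%R.

Definition pow2_ceil (tau : nat) : nat := 2 ^ up_log 2 tau.

(* An algorithm, uniform in n and in the input parameter tau.
   - [State] : arbitrary local state of a machine.
   - messages have O(log n) bits: they are elements of 'I_(n ^ msg_exp).
   - private randomness: at initialisation and in every round each machine
     draws a fresh uniform element of 'I_(rnd n tau).+1 (independent across
     machines and rounds); rnd is arbitrary.
   - [init n tau i N r] : initial local computation of machine i knowing n,
     tau, its ID and its neighbourhood N, with random draw r.
   - [send n tau s r j] : message sent to machine j in a round by a machine in
     state s with random draw r (of this round).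
   - [recv n tau s r m] : new state after receiving m j from every machine j.
   - [output s] : the walk held by the machine (None = not finished yet). *)
Record algorithm := Algorithm {
  State : Type;
  msg_exp : nat;
  rnd : nat -> nat -> nat;
  init : forall n tau : nat, 'I_n -> {set 'I_n} -> 'I_(rnd n tau).+1 -> State;
  send : forall n tau : nat, State -> 'I_(rnd n tau).+1 -> 'I_n -> 'I_(n ^ msg_exp);
  recv : forall n tau : nat, State -> 'I_(rnd n tau).+1 ->
           ('I_n -> 'I_(n ^ msg_exp)) -> State;
  output : State -> option (seq nat)
}.

Arguments init a n tau : clear implicits.
Arguments send a n tau : clear implicits.
Arguments recv a n tau : clear implicits.

Section Execution.
Variables (A : algorithm) (n tau : nat) (G : rel 'I_n).

Definition rtape := nat -> 'I_n -> 'I_(rnd A n tau).+1.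

(* configuration after t rounds (draw 0 used at init, draw t in round t) *)
Fixpoint config (rho : rtape) (t : nat) : 'I_n -> State A :=
  match t with
  | 0 => fun i => init A n tau i (neighbours G i) (rho 0 i)
  | t'.+1 =>
      let s := config rho t' in
      fun i => recv A n tau (s i) (rho t i)
                    (fun j => send A n tau (s j) (rho t j) i)
  end.

Definition halted (cfg : 'I_n -> State A) : bool :=
  [forall i, output (cfg i) != None].

Fixpoint final_by (rho : rtape) (t : nat) : option ('I_n -> State A) :=
  match t with
  | 0 => if halted (config rho 0) then Some (config rho 0) else None
  | t'.+1 =>
      match final_by rho t' with
      | Some c => Some c
      | None => if halted (config rho t) then Some (config rho t) else None
      end
  end.

(* randomness used up to (and including) round t *)
Definition sample (t : nat) :=
  {ffun 'I_t.+1 -> {ffun 'I_n -> 'I_(rnd A n tau).+1}}.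

Definition extend t (f : sample t) : rtape :=
  fun k i => match insub k with Some k' => f k' i | None => ord0 end.

(* probability of an event depending only on the randomness of rounds <= t *)
Definition Pr (t : nat) (E : rtape -> bool) : RR :=
  (#|[set f : sample t | E (extend f)]|%:R / #|{: sample t}|%:R)%R.

Definition terminated_by (t : nat) (rho : rtape) : bool :=
  if final_by rho t is Some _ then true else false.

Definition holds_by (t : nat) (v : 'I_n) (w : seq 'I_n) (rho : rtape) : bool :=
  if final_by rho t is Some c then output (c v) == Some (map val w) else false.

End Execution.


Arguments Pr A n tau t E : clear implicits.
Arguments terminated_by A n tau G t rho : clear implicits.
Arguments holds_by A n tau G t v w rho : clear implicits.

From HB Require Import structures.
From mathcomp Require Import all_boot all_order all_algebra.
From mathcomp Require Import all_classical all_reals all_analysis.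
From mathcomp Require Import Rstruct Rstruct_topology.
From mathcomp Require Import zify ring lra.
Set Implicit Arguments. Unset Strict Implicit. Unset Printing Implicit Defensive.
Import Order.TTheory GRing.Theory Num.Theory.

(* Every machine [x] draws once, at initialisation, [tau' = pow2_ceil tau]
   independent uniform neighbour indices [s_x(0), ..., s_x(tau'-1)].  The walk
   from [v] is [W(0) = v], [W(g+1) = s_{W(g)}(g)]: step [g] reads the [g]-th
   sample of the current vertex, so distinct steps of one walk read distinct,
   independent samples and every walk is a simple random walk, although walks
   from different start vertices share their randomness.
   The walks are computed in blocks of [B = min(tau', n - 1)] steps by pointer
   doubling.  Machine [x] keeps a row indexed by [j <= B] whose entry [j] is the
   image of [x] under the composite of a window of the block's maps ending at
   map [j]; one doubling step (a transpose round, then a compose round, each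
   message a pair of vertex IDs) doubles the windows, so after
   [log2 (B + 1)] steps entry [j] is [W(cB + j)] for block [c].  Hence
   [ceil(tau' / B)] blocks of [O(log B)] rounds: [O(log tau)] rounds when
   [tau' < n] and [O(tau / n * log n)] otherwise.  The round count is
   deterministic, so the algorithm terminates with certainty. *)

(** * Counting *)

Lemma card_ffun_forall (aT rT : finType) (P : aT -> pred rT) :
  #|[pred F : {ffun aT -> rT} | [forall x, P x (F x)]]| = \prod_(x : aT) #|P x|.
Proof.
have -> : #|[pred F : {ffun aT -> rT} | [forall x, P x (F x)]]| = #|family P|.
  by apply: eq_card => F; rewrite !inE.
by rewrite card_family foldrE big_map big_enum.
Qed.

Lemma card_preim_bij (aT rT : finType) (f : aT -> rT) (P : pred rT) :
  bijective f -> #|[pred x | P (f x)]| = #|P|.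
Proof.
move=> fb; rewrite -(on_card_preimset (onW_bij P fb)).
by apply: eq_card => x; rewrite !inE.
Qed.

Lemma sum_mod_eq q D i : i < D -> \sum_(0 <= d < q * D) (d %% D == i) = q.
Proof.
move=> iD; elim: q => [|q IH]; first by rewrite mul0n big_geq.
rewrite mulSn addnC (@big_cat_nat _ _ _ (q * D)) ?leq_addr //= IH.
rewrite -{1}[q * D]add0n big_addn addKn.
have -> : \sum_(0 <= j < D) ((j + q * D) %% D == i) = \sum_(0 <= j < D) (j == i).
  by apply: eq_big_nat => j /andP[_ jD]; rewrite addnC modnMDl modn_small.
rewrite big_mkord (bigD1 (Ordinal iD)) //= eqxx big1 ?addn0 ?addn1 // => j.
by rewrite -val_eqE /= => /negbTE ->.
Qed.

Lemma card_mod_eq M D i : i < D -> D %| M ->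
  #|[pred d : 'I_M | d %% D == i]| = M %/ D.
Proof.
move=> iD /dvdnP [q ->]; rewrite mulnK ?(leq_ltn_trans (leq0n i) iD) //.
rewrite -[RHS](sum_mod_eq q iD) big_mkord -sum1_card big_mkcond /=.
by apply: eq_bigr => d _; rewrite inE; case: (_ == i).
Qed.

Lemma card_nth_enum_mod n M (u y : 'I_n) (N : {set 'I_n}) :
  0 < #|N| -> #|N| %| M ->
  #|[pred d : 'I_M | nth u (enum N) (d %% #|N|) == y]| =
  if y \in N then M %/ #|N| else 0.
Proof.
move=> N0 NM; have sz : size (enum N) = #|N| by rewrite cardE.
case: ifP => yN.
  have iN : index y (enum N) < #|N| by rewrite -sz index_mem mem_enum.
  rewrite -(card_mod_eq iN NM); apply: eq_card => d; rewrite !inE.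
  have dN : d %% #|N| < #|N| by rewrite ltn_mod.
  apply/eqP/eqP => [<-|->]; first by rewrite index_uniq ?enum_uniq ?sz.
  by rewrite nth_index ?mem_enum.
apply: eq_card0 => d; rewrite !inE; apply/negP => /eqP E.
have : nth u (enum N) (d %% #|N|) \in enum N by rewrite mem_nth // sz ltn_mod.
by rewrite E mem_enum yN.
Qed.

(** * Executions *)

Section Executions.
Variables (A : algorithm) (n tau : nat) (G : rel 'I_n) (rho : rtape A n tau).

Lemma final_by_Some t cf : final_by G rho t = Some cf ->
  exists2 t0, t0 <= t & cf = config G rho t0 /\ halted (config G rho t0).
Proof.
elim: t cf => [|t IH] cf /=; first by case: ifP => // H [<-]; exists 0.
case E: (final_by G rho t) => [c|]; last by case: ifP => // H [<-]; exists t.+1.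
by case=> <-; have [t0 t0t ?] := IH _ E; exists t0 => //; apply: leqW.
Qed.

Lemma final_by_halted t0 t : t0 <= t -> halted (config G rho t0) ->
  exists cf, final_by G rho t = Some cf.
Proof.
elim: t => [|t IH]; first by rewrite leqn0 => /eqP -> /= ->; eexists.
rewrite leq_eqVlt ltnS => /orP[/eqP -> /= ->|t0t Ht0]; first by case: final_by; eexists.
by have [cf /= ->] := IH t0t Ht0; eexists.
Qed.

End Executions.

Section Probability.
Variables (A : algorithm) (n tau t : nat).
Local Notation draws := {ffun 'I_n -> 'I_(rnd A n tau).+1}.
Local Open Scope ring_scope.

Lemma card_sample : #|{: sample A n tau t}| = (#|{: draws}| ^ t.+1)%N.
Proof. by rewrite card_ffun card_ord. Qed.

Lemma card_draws_gt0 : (0 < #|{: draws}|)%N.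
Proof. by rewrite card_ffun expn_gt0 card_ord. Qed.

Lemma Pr_certain (E : rtape A n tau -> bool) : (forall rho, E rho) ->
  Pr A n tau t E = 1.
Proof.
move=> ET; rewrite /Pr (eq_card (B := predT)) => [|f]; last by rewrite !inE ET.
by rewrite divff // pnatr_eq0 -lt0n card_sample expn_gt0 card_draws_gt0.
Qed.

Lemma extend0 (f : sample A n tau t) : extend f 0 = f ord0.
Proof.
apply: funext => i; rewrite /extend; case: insubP => // k _ k0.
by congr (f _ i); apply: val_inj.
Qed.

Lemma Pr_init_draws (P : {pred draws}) (E : rtape A n tau -> bool) :
  (forall f : sample A n tau t, E (extend f) = (f ord0 \in P)) ->
  Pr A n tau t E = #|P|%:R / #|{: draws}|%:R.
Proof.
move=> EP; rewrite /Pr.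
pose Q (k : 'I_t.+1) : pred draws := fun F => (k != ord0) || (F \in P).
have -> : #|[set f : sample A n tau t | E (extend f)]| =
          #|[pred f : sample A n tau t | [forall k, Q k (f k)]]|.
  apply: eq_card => f; rewrite !inE EP.
  by apply/idP/forallP => [Pf k|/(_ ord0)]; rewrite /Q; [case: eqP => // ->|rewrite eqxx].
rewrite card_ffun_forall (bigD1 ord0) //= /Q eqxx.
rewrite (eq_bigr (fun _ => #|{: draws}|)) => [|k k0]; last first.
  by apply: eq_card => F; rewrite !inE /Q k0.
have D0 : #|{: draws}|%:R != 0 :> RR by rewrite pnatr_eq0 -lt0n card_draws_gt0.
rewrite prod_nat_const cardC1 card_ord card_sample natrM !natrX exprSr.
by rewrite invfM mulrA mulfK ?expf_neq0.
Qed.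

End Probability.

(** * The algorithm *)

Lemma pow2_ceil_gt0 tau : 0 < pow2_ceil tau.
Proof. by rewrite expn_gt0. Qed.

Lemma pow2_ceil_ge tau : tau <= pow2_ceil tau.
Proof. exact: up_logP. Qed.

Lemma pow2_ceil_lt_double tau : 0 < tau -> pow2_ceil tau < tau.*2.
Proof.
move=> t0; case: (ltnP 1 tau) => t1; last first.
  by have -> : tau = 1 by lia.
have := up_log_gtn (isT : 1 < 2) t1; have := up_log_gt0 2 tau.
rewrite t1 /pow2_ceil.
by case: (up_log 2 tau) => [|k] //= _; rewrite expnS; lia.
Qed.

Definition block_len n tau := minn (pow2_ceil tau) n.-1.
Definition doubling_steps n tau := up_log 2 (block_len n tau).+1.
Definition num_blocks n tau :=
  (pow2_ceil tau + (block_len n tau).-1) %/ block_len n tau.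

(* The initial draw of a machine encodes [pow2_ceil tau] digits below [n`!];
   reducing a digit modulo the degree gives a uniform neighbour index, since
   every degree divides [n`!]. *)
Definition digits n tau := {ffun 'I_(pow2_ceil tau) -> 'I_(n`!)}.
Definition rnd_range n tau := #|{: digits n tau}|.-1.

Lemma rnd_range_card n tau : (rnd_range n tau).+1 = #|{: digits n tau}|.
Proof. by rewrite /rnd_range card_ffun card_ord prednK // expn_gt0 fact_gt0. Qed.

Definition decode n tau (r : 'I_(rnd_range n tau).+1) : digits n tau :=
  enum_val (cast_ord (rnd_range_card n tau) r).

Lemma decode_bij n tau : bijective (@decode n tau).
Proof.
exists (fun d => cast_ord (esym (rnd_range_card n tau)) (enum_rank d)) => r.
  by rewrite /decode enum_valK cast_ordK.
by rewrite /decode cast_ordKV enum_rankK.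
Qed.

Definition nbr_sample n tau (u : 'I_n) (N : {set 'I_n})
    (r : 'I_(rnd_range n tau).+1) (g : nat) : 'I_n :=
  if insub g is Some g' then nth u (enum N) (decode r g' %% #|N|) else u.

(* [phase K t = (c, k, p)]: after [t] rounds the machines are in block [c],
   doubling step [k < K], half-round [p] (0: transpose, 1: compose). *)
Definition phase_step K (ckp : nat * nat * nat) : nat * nat * nat :=
  let '(c, k, p) := ckp in
  if p == 0 then (c, k, 1) else if k.+1 < K then (c, k.+1, 0) else (c.+1, 0, 0).
Definition phase K t := iter t (phase_step K) (0, 0, 0).

(* [st_row j] is the current row entry [j <= block_len]; [st_col] and
   [st_col_shift] are the columns [st_id] and [st_id - 2^k] of all rows,
   received in a transpose half-round; [st_walk] is the computed prefix of
   the walk. *)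
Record node_state := NodeState {
  st_n : nat; st_tau : nat; st_id : nat; st_round : nat;
  st_samples : nat -> nat; st_row : nat -> nat;
  st_col : nat -> nat; st_col_shift : nat -> nat; st_walk : nat -> nat }.

Lemma ord_sqr_gt0 n (j : 'I_n) : 0 < n ^ 2.
Proof. by rewrite expn_gt0 (leq_ltn_trans (leq0n j) (ltn_ord j)). Qed.

Definition encode_msg n (j : 'I_n) (m : nat) : 'I_(n ^ 2) :=
  Ordinal (ltn_pmod m (ord_sqr_gt0 j)).

Definition ord_ext n (F : 'I_n -> nat) (y : nat) : nat :=
  if insub y is Some y' then F y' else 0.

Definition walk_init n tau (i : 'I_n) (N : {set 'I_n})
    (r : 'I_(rnd_range n tau).+1) : node_state :=
  let smp g := val (nbr_sample i N r g) in
  NodeState n tau i 0 smp (fun j => if j == 0 then val i else smp j.-1)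
    (fun _ => 0) (fun _ => 0)
    (fun g => if g == 0 then val i else if g == 1 then smp 0 else 0).

(* A pair of vertices [(a, b)] travels as the single message [a * n + b]. *)
Definition walk_send n tau (s : node_state) (r : 'I_(rnd_range n tau).+1)
    (j : 'I_n) : 'I_(n ^ 2) :=
  let '(c, k, p) := phase (doubling_steps n tau) (st_round s) in
  encode_msg j (if p == 0 then
      st_row s j * n + (if 2 ^ k <= j then st_row s (j - 2 ^ k) else 0)
    else if 2 ^ k <= st_id s then st_col s (st_col_shift s j) else st_col s j).

Definition walk_recv n tau (s : node_state) (r : 'I_(rnd_range n tau).+1)
    (m : 'I_n -> 'I_(n ^ 2)) : node_state :=
  let '(c, k, p) := phase (doubling_steps n tau) (st_round s) in
  let B := block_len n tau in
  if p == 0 then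
    NodeState (st_n s) (st_tau s) (st_id s) (st_round s).+1 (st_samples s)
      (st_row s) (ord_ext (fun y => m y %/ n)) (ord_ext (fun y => m y %% n))
      (st_walk s)
  else
    let row' j := if j <= B then ord_ext (fun y => m y) j else st_row s j in
    if k.+1 < doubling_steps n tau then
      NodeState (st_n s) (st_tau s) (st_id s) (st_round s).+1 (st_samples s)
        row' (fun _ => 0) (fun _ => 0) (st_walk s)
    else
      NodeState (st_n s) (st_tau s) (st_id s) (st_round s).+1 (st_samples s)
        (fun j => if j == 0 then row' B else st_samples s (c.+1 * B + j.-1))
        (fun _ => 0) (fun _ => 0)
        (fun g => if c * B <= g <= c * B + B then row' (g - c * B)
                  else st_walk s g).

Definition walk_output (s : node_state) : option (seq nat) :=
  let '(c, _, _) := phase (doubling_steps (st_n s) (st_tau s)) (st_round s) in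
  if (pow2_ceil (st_tau s) == 1) || (num_blocks (st_n s) (st_tau s) <= c) then
    Some [seq st_walk s g | g <- iota 0 (pow2_ceil (st_tau s)).+1]
  else None.

Definition walkA : algorithm :=
  @Algorithm node_state 2 rnd_range walk_init walk_send walk_recv walk_output.

Definition num_rounds n tau :=
  if pow2_ceil tau == 1 then 0 else num_blocks n tau * (doubling_steps n tau).*2.

(** * Simulation *)

Lemma phase_bounds K t : 0 < K -> let '(c, k, p) := phase K t in k < K /\ p < 2.
Proof.
move=> K0; elim: t => [|t IH] //; rewrite /phase iterS -/(phase K t).
by case: (phase K t) IH => [[c k] p] [kK p2] /=; case: (p == 0) => //; case: ifP.
Qed.

Lemma phaseSS K t : phase K t.+2 = phase_step K (phase_step K (phase K t)).
Proof. by rewrite /phase !iterS. Qed.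

Lemma phase_doubling K c k : phase K (c * K.*2) = (c, 0, 0) ->
  k < K -> phase K (c * K.*2 + k.*2) = (c, k, 0).
Proof.
move=> Ec; elim: k => [|k IH] kK; first by rewrite addn0.
by rewrite doubleS !addnS phaseSS IH ?(ltnW kK) //= kK.
Qed.

Lemma phase_block K c : 0 < K -> phase K (c * K.*2) = (c, 0, 0).
Proof.
move=> K0; elim: c => [|c IH] //.
have -> : c.+1 * K.*2 = (c * K.*2 + (K.-1).*2).+2 by rewrite mulSn -!muln2; lia.
by rewrite phaseSS phase_doubling ?prednK ?ltnn //= ?prednK ?ltnn //; lia.
Qed.

Section Walk.
Variables (n tau : nat) (G : rel 'I_n) (F : 'I_n -> 'I_(rnd_range n tau).+1).
Local Notation B := (block_len n tau).

Definition step (x : 'I_n) (g : nat) : 'I_n :=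
  nbr_sample x (neighbours G x) (F x) g.

Fixpoint walk (g : nat) (x : 'I_n) : 'I_n :=
  if g is g'.+1 then step (walk g' x) g' else x.

Definition walk_seq (v : 'I_n) := [seq walk g v | g <- iota 0 (pow2_ceil tau).+1].

Definition block_map c j : 'I_n -> 'I_n :=
  if j == 0 then walk (c * B) else step^~ (c * B + j.-1).

Fixpoint window_map c k j : 'I_n -> 'I_n :=
  if k is k'.+1 then
    if 2 ^ k' <= j then window_map c k' j \o window_map c k' (j - 2 ^ k')
    else window_map c k' j
  else block_map c j.

Fixpoint segment_map c a d : 'I_n -> 'I_n :=
  if d is d'.+1 then block_map c (a + d) \o segment_map c a d' else block_map c a.

Lemma segment_map_cat c a d1 d2 x :
  segment_map c (a + d1 + 1) d2 (segment_map c a d1 x) =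
  segment_map c a (d1 + d2 + 1) x.
Proof.
elim: d2 => [|d2 IH] /=; first by rewrite addn0 !addn1 /= addnS.
rewrite IH (_ : d1 + d2.+1 + 1 = (d1 + d2 + 1).+1) /=; last lia.
by rewrite (_ : a + d1 + 1 + d2.+1 = a + (d1 + d2 + 1).+1) //; lia.
Qed.

Lemma window_map_segment c k j x :
  window_map c k j x = segment_map c (j + 1 - 2 ^ k) (j - (j + 1 - 2 ^ k)) x.
Proof.
elim: k j x => [|k IH] j x /=; first by rewrite expn0 addnK subnn.
have k0 : 0 < 2 ^ k by rewrite expn_gt0.
rewrite expnS mul2n -addnn; case: ifP => kj /=; last first.
  have jk : j < 2 ^ k by rewrite ltnNge kj.
  rewrite IH (_ : j + 1 - 2 ^ k = 0); last lia.
  by rewrite (_ : j + 1 - (2 ^ k + 2 ^ k) = 0); last lia.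
rewrite !IH; set a := j - 2 ^ k + 1 - 2 ^ k; set d1 := j - 2 ^ k - a.
rewrite (_ : j + 1 - 2 ^ k = a + d1 + 1) ?segment_map_cat; last first.
  by rewrite /a /d1; lia.
rewrite (_ : j + 1 - (2 ^ k + 2 ^ k) = a); last by rewrite /a; lia.
by rewrite (_ : d1 + (j - (a + d1 + 1)) + 1 = j - a) //; rewrite /d1 /a; lia.
Qed.

Lemma segment_map0 c j x : segment_map c 0 j x = walk (c * B + j) x.
Proof.
by elim: j => [|j IH] /=; rewrite /block_map /= ?addn0 // IH addnS.
Qed.

Lemma window_map_full c k j x :
  j < 2 ^ k -> window_map c k j x = walk (c * B + j) x.
Proof.
move=> jk; rewrite window_map_segment (_ : j + 1 - 2 ^ k = 0) ?subn0 //.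
  exact: segment_map0.
lia.
Qed.

Definition row_at c k (x : 'I_n) (j : nat) : nat :=
  val (if j <= B then window_map c k j x else block_map c j x).

Definition walk_at c (x : 'I_n) (g : nat) : nat :=
  if g <= maxn 1 (c * B) then val (walk g x) else 0.

(* The configuration reached after [t] rounds when the initial draws are [F]. *)
Definition ideal_state t (x : 'I_n) : node_state :=
  let '(c, k, p) := phase (doubling_steps n tau) t in
  NodeState n tau x t (fun g => val (step x g)) (row_at c k x)
    (if p == 0 then fun _ => 0 else ord_ext (fun y => row_at c k y x))
    (if p == 0 then fun _ => 0 else
       ord_ext (fun y => if 2 ^ k <= x then row_at c k y (x - 2 ^ k) else 0))
    (walk_at c x).

Lemma ideal_stateE t x c k p : phase (doubling_steps n tau) t = (c, k, p) ->
  ideal_state t x =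
  NodeState n tau x t (fun g => val (step x g)) (row_at c k x)
    (if p == 0 then fun _ => 0 else ord_ext (fun y => row_at c k y x))
    (if p == 0 then fun _ => 0 else
       ord_ext (fun y => if 2 ^ k <= x then row_at c k y (x - 2 ^ k) else 0))
    (walk_at c x).
Proof. by rewrite /ideal_state => ->. Qed.

End Walk.

Lemma ord_ext_val n (F : 'I_n -> nat) (x : 'I_n) : ord_ext F x = F x.
Proof. by rewrite /ord_ext valK. Qed.

Lemma ord_extE n (F : 'I_n -> nat) j (jn : j < n) : ord_ext F j = F (Ordinal jn).
Proof. by rewrite /ord_ext insubT. Qed.

Lemma pair_code_lt n a b : a < n -> b < n -> a * n + b < n ^ 2.
Proof. by move=> an bn; rewrite expnS expn1; nia. Qed.

Section Simulation.
Variables (n tau : nat) (G : rel 'I_n).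
Hypothesis n_gt1 : 1 < n.
Local Notation B := (block_len n tau).
Local Notation K := (doubling_steps n tau).

Lemma block_len_gt0 : 0 < B.
Proof. by rewrite leq_min pow2_ceil_gt0 -subn1 subn_gt0. Qed.

Lemma block_len_lt : B < n.
Proof. by rewrite /block_len gtn_min orbC prednK ?ltnSn //; lia. Qed.

Lemma block_len_lt_exp : B < 2 ^ K.
Proof. exact: up_logP. Qed.

Lemma doubling_steps_gt0 : 0 < K.
Proof. by rewrite up_log_gt0 /= ltnS block_len_gt0. Qed.

Variable F : 'I_n -> 'I_(rnd_range n tau).+1.

Lemma walk_send_transpose t c k (x y : 'I_n) r : phase K t = (c, k, 0) ->
  val (@walk_send n tau (ideal_state G F t y) r x) =
  row_at G F c k y x * n +
  (if 2 ^ k <= x then row_at G F c k y (x - 2 ^ k) else 0).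
Proof.
move=> E; rewrite /ideal_state E /walk_send /= E /= modn_small // pair_code_lt //.
  exact: ltn_ord.
by case: ifP => _; [exact: ltn_ord | lia].
Qed.

Lemma walk_send_compose t c k (x y : 'I_n) r : phase K t = (c, k, 1) -> y <= B ->
  val (@walk_send n tau (ideal_state G F t y) r x) = row_at G F c k.+1 x y.
Proof.
move=> E yB; rewrite /ideal_state E /walk_send /= E /= !ord_ext_val /row_at /=.
have lt_sqr (m : 'I_n) : m < n ^ 2.
  by rewrite (leq_trans (ltn_ord m)) // expnS expn1 leq_pmulr // ltnW.
rewrite yB; case: ifP => ky /=; last by rewrite modn_small.
by rewrite (leq_trans (leq_subr _ _) yB) /= ky ord_ext_val modn_small.
Qed.

Lemma compose_row t c k (x : 'I_n) r j : phase K t = (c, k, 1) ->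
  (if j <= B
   then ord_ext (fun y => val (@walk_send n tau (ideal_state G F t y) (r y) x)) j
   else row_at G F c k x j) = row_at G F c k.+1 x j.
Proof.
move=> E; case: ifP => jB; last by rewrite /row_at jB.
have jn : j < n by apply: leq_ltn_trans jB block_len_lt.
by rewrite ord_extE (walk_send_compose _ _ E).
Qed.

Lemma row_at_next_block c (x : 'I_n) j :
  (if j == 0 then row_at G F c K x B else val (step G F x (c.+1 * B + j.-1))) =
  row_at G F c.+1 0 x j.
Proof.
rewrite {1}/row_at leqnn window_map_full ?block_len_lt_exp //.
case: (j =P 0) => [->|/eqP/negbTE j0].
  by rewrite /row_at /= /block_map /= mulSn addnC.
by rewrite /row_at /=; case: ifP => _; rewrite /block_map j0.
Qed.

Lemma walk_at_next_block c (x : 'I_n) g :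
  (if c * B <= g <= c * B + B then row_at G F c K x (g - c * B)
   else walk_at G F c x g) =
  walk_at G F c.+1 x g.
Proof.
have B0 := block_len_gt0; rewrite /walk_at mulSn.
case: (leqP (c * B) g) => g1 /=; last first.
  by rewrite !leq_max (ltnW g1) (ltnW (leq_trans g1 (leq_addl B _))) !orbT.
case: (leqP g (c * B + B)) => g2 /=; last first.
  by rewrite !ifF //; apply/negbTE; rewrite -ltnNge gtn_max; apply/andP; split; lia.
rewrite /row_at leq_subLR g2 window_map_full ?subnKC //; last first.
  by rewrite (leq_ltn_trans _ block_len_lt_exp) // leq_subLR.
by rewrite leq_max addnC g2 orbT.
Qed.

Lemma ideal_stateS t (x : 'I_n) (r : 'I_n -> 'I_(rnd_range n tau).+1) :
  walk_recv (ideal_state G F t x) (r x)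
    (fun y => @walk_send n tau (ideal_state G F t y) (r y) x) =
  ideal_state G F t.+1 x.
Proof.
have := phase_bounds t doubling_steps_gt0.
have ES : phase K t.+1 = phase_step K (phase K t) by rewrite /phase iterS.
case E: (phase K t) ES => [[c k] p] ES [kK p2].
case: p p2 E ES => [|[|//]] _ E ES.
  rewrite (ideal_stateE _ _ _ E) (ideal_stateE _ _ _ ES) /walk_recv /= E /=.
  have n0 : 0 < n by lia.
  congr NodeState; apply: funext => z; congr ord_ext; apply: funext => y;
    rewrite (walk_send_transpose _ _ _ E) ?divnMDl ?modnMDl //
            ?divn_small ?addn0 ?modn_small //;
    by [exact: ltn_ord | case: ifP => _; [exact: ltn_ord | lia]].
case: (ltnP k.+1 K) => kK1.
  have ES' : phase K t.+1 = (c, k.+1, 0) by rewrite ES /= kK1.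
  rewrite (ideal_stateE _ _ _ E) (ideal_stateE _ _ _ ES') /walk_recv /= E /= kK1.
  by congr NodeState; apply: funext => j; rewrite (compose_row _ _ _ E).
have ES' : phase K t.+1 = (c.+1, 0, 0) by rewrite ES /= ltnNge kK1.
rewrite (ideal_stateE _ _ _ E) (ideal_stateE _ _ _ ES') /walk_recv /= E /=.
rewrite ltnNge kK1 /=.
have kK2 : k.+1 = K by lia.
by congr NodeState; apply: funext => j;
  rewrite (compose_row _ _ _ E) kK2 ?row_at_next_block ?walk_at_next_block.
Qed.

End Simulation.

Lemma config_ideal n tau (G : rel 'I_n) (rho : rtape walkA n tau) t : 1 < n ->
  config G rho t = ideal_state G (rho 0) t.
Proof.
move=> n_gt1; elim: t => [|t IH]; apply: funext => x; last first.
  by rewrite /= IH ideal_stateS.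
rewrite /ideal_state /= /walk_init; congr NodeState; apply: funext.
  move=> j; rewrite /row_at /= /block_map mul0n add0n.
  by case: (j <= _); case: (j == 0).
by case=> [|[|g]] //; rewrite /walk_at /= mul0n.
Qed.

Section Termination.
Variables (n tau : nat) (G : rel 'I_n).
Hypothesis n_gt1 : 1 < n.
Local Notation K := (doubling_steps n tau).

Lemma pow2_ceil_le_blocks : pow2_ceil tau <= num_blocks n tau * block_len n tau.
Proof.
have B0 := block_len_gt0 tau n_gt1; rewrite /num_blocks.
have := divn_eq (pow2_ceil tau + (block_len n tau).-1) (block_len n tau).
by have := ltn_pmod (pow2_ceil tau + (block_len n tau).-1) B0; lia.
Qed.

Lemma output_ideal (F : 'I_n -> 'I_(rnd_range n tau).+1) t x :
  walk_output (ideal_state G F t x) =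
  let '(c, _, _) := phase K t in
  if (pow2_ceil tau == 1) || (num_blocks n tau <= c)
  then Some (map val (walk_seq G F x)) else None.
Proof.
rewrite /ideal_state; case E: (phase _ t) => [[c k] p]; rewrite /walk_output /= E.
case: ifP => // done; congr Some; rewrite /walk_seq -map_comp.
congr cons; apply/eq_in_map => g; rewrite mem_iota add1n ltnS => /andP[_ gL] /=.
rewrite /walk_at ifT // leq_max.
case/orP: done => [/eqP L1|Bc]; first by rewrite -L1 gL.
have LcB : pow2_ceil tau <= c * block_len n tau.
  by apply: leq_trans pow2_ceil_le_blocks _; rewrite leq_mul2r Bc orbT.
by rewrite (leq_trans gL LcB) orbT.
Qed.

Variable rho : rtape walkA n tau.

Lemma halted_config t : halted (config G rho t) =
  let '(c, _, _) := phase K t in (pow2_ceil tau == 1) || (num_blocks n tau <= c).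
Proof.
rewrite /halted config_ideal //; have x0 : 'I_n := Ordinal (ltnW n_gt1).
case E: (phase _ t) => [[c k] p].
apply/forallP/idP => [/(_ x0)|done x]; rewrite /= output_ideal E; first by case: ifP.
by rewrite done.
Qed.

Lemma halted_num_rounds : halted (config G rho (num_rounds n tau)).
Proof.
rewrite halted_config /num_rounds; case: ifP => [_|_]; first by case: (phase _ 0) => [[]].
by rewrite phase_block ?leqnn ?orbT // doubling_steps_gt0.
Qed.

Lemma terminated_num_rounds : terminated_by walkA n tau G (num_rounds n tau) rho.
Proof.
by rewrite /terminated_by; have [cf ->] := final_by_halted (leqnn _) halted_num_rounds.
Qed.

Lemma holds_by_walk_seq t v w : num_rounds n tau <= t ->
  holds_by walkA n tau G t v w rho = (walk_seq G (rho 0) v == w).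
Proof.
move=> Tt; rewrite /holds_by; have [cf Ecf] := final_by_halted Tt halted_num_rounds.
rewrite Ecf; have [t0 _ [-> halt]] := final_by_Some Ecf.
move: halt; rewrite halted_config config_ideal // /= output_ideal.
case: (phase _ t0) => [[c k] p] ->.
by apply/eqP/eqP => [[] eq_walk|->] //; apply: (inj_map val_inj); exact: eq_walk.
Qed.

End Termination.

(** * Distribution of the walks *)

Section Distribution.
Variables (n tau : nat) (G : rel 'I_n).
Local Notation L := (pow2_ceil tau).
Local Notation M := (n`!).
Local Notation draws := {ffun 'I_n -> 'I_(rnd_range n tau).+1}.

Lemma walk_seq_eqE (F : 'I_n -> 'I_(rnd_range n tau).+1) v w :
  (walk_seq G F v == w) = [&& size w == L.+1, nth v w 0 == v &
     [forall g : 'I_L, step G F (nth v w g) g == nth v w g.+1]].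
Proof.
apply/eqP/and3P => [<-|[/eqP sw /eqP w0 /forallP wS]].
  rewrite size_map size_iota; split => //; apply/forallP => g.
  have gL := ltn_ord g; rewrite /walk_seq !(nth_map 0) ?size_iota; try lia.
  by rewrite !nth_iota ?add0n //; lia.
apply: (@eq_from_nth _ v); first by rewrite size_map size_iota sw.
move=> g; rewrite size_map size_iota => gL.
rewrite (nth_map 0) ?size_iota // nth_iota // add0n.
elim: g gL => [|g IH] gL; first by rewrite w0.
by rewrite /= IH 1?ltnW //; move/eqP: (wS (Ordinal (gL : g < L))).
Qed.

Lemma nbr_sample_ord (u : 'I_n) N r (g : 'I_L) :
  nbr_sample u N r g = nth u (enum N) (decode r g %% #|N|).
Proof. by rewrite /nbr_sample valK. Qed.

Hypothesis degree_gt0 : forall u : 'I_n, 0 < degree G u.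

Lemma degree_dvd_fact (u : 'I_n) : degree G u %| M.
Proof. by rewrite dvdn_fact // degree_gt0 /= -{2}(card_ord n) max_card. Qed.

Variables (v : 'I_n) (w : seq 'I_n).
Local Notation w_ g := (nth v w g).

Definition next_digits g :=
  if w_ g.+1 \in neighbours G (w_ g) then M %/ degree G (w_ g) else 0.

(* The draws of distinct vertices are independent, and each step of [w] only
   constrains the digit of its own vertex at its own time. *)
Lemma card_walk_event :
  #|[pred F : draws | [forall g : 'I_L, step G F (w_ g) g == w_ g.+1]]| =
  \prod_(g < L) (next_digits g * M ^ n.-1).
Proof.
pose Q (u : 'I_n) (g : 'I_L) := [pred d : 'I_M | (w_ g == u) ==>
   (nth u (enum (neighbours G u)) (d %% #|neighbours G u|) == w_ g.+1)].
pose A u := [pred r : 'I_(rnd_range n tau).+1 | [forall g, Q u g (decode r g)]].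
have -> : #|[pred F : draws | [forall g : 'I_L, step G F (w_ g) g == w_ g.+1]]| =
          #|[pred F : draws | [forall u, A u (F u)]]|.
  apply: eq_card => F; rewrite !inE; apply/forallP/forallP => [wF u|wF g].
    rewrite inE; apply/forallP => g; apply/implyP => /eqP <-.
    by rewrite -nbr_sample_ord; apply: wF.
  move/forallP/(_ g): (wF (w_ g)).
  by rewrite !inE eqxx implyTb /step nbr_sample_ord.
rewrite (card_ffun_forall A).
under eq_bigr => u _ do
  rewrite (card_preim_bij (fun d : digits n tau => [forall g, Q u g (d g)])
                          (@decode_bij n tau)) (card_ffun_forall (fun g => Q u g)).
rewrite exchange_big /=; apply: eq_bigr => g _; rewrite (bigD1 (w_ g)) //=.
have -> : #|Q (w_ g) g| = next_digits g.
  rewrite /next_digits -(@card_nth_enum_mod n M (w_ g) (w_ g.+1) _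
                           (degree_gt0 _) (degree_dvd_fact _)).
  by apply: eq_card => d; rewrite !inE eqxx.
rewrite (eq_bigr (fun _ => M)) => [|u /negbTE wu]; last first.
  by rewrite -[RHS]card_ord; apply: eq_card => d; rewrite !inE eq_sym wu.
by rewrite prod_nat_const cardC1 card_ord.
Qed.

End Distribution.

Lemma connected_degree_gt0 n (G : rel 'I_n) : (1 < n)%N -> connected_graph G ->
  forall u : 'I_n, (0 < degree G u)%N.
Proof.
move=> n1 Gc u.
have [y yu] : exists y : 'I_n, y != u.
  have [n0 n1'] : (0 < n)%N /\ (1 < n)%N by lia.
  case: (u =P Ordinal n0) => [->|H]; first by exists (Ordinal n1').
  by exists (Ordinal n0); apply/eqP => E; apply: H.
move: (Gc u y) => /connectP [[|z p]] /=; first by move=> _ E; rewrite E eqxx in yu.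
by case/andP => Guz _ _; apply/card_gt0P; exists z; rewrite inE.
Qed.

Section WalkLaw.
Local Open Scope ring_scope.

Lemma rw_probE n (G : rel 'I_n) L (v : 'I_n) (w : seq 'I_n) :
  rw_prob G L v w =
  if (size w == L.+1) && (nth v w 0 == v) then
    \prod_(g < L) (if nth v w g.+1 \in neighbours G (nth v w g)
                   then (degree G (nth v w g))%:R^-1 else 0)
  else 0.
Proof.
elim: L v w => [|L IH] v w.
  by case: w => [|x [|y s]] //=; rewrite big_ord0; case: (x == v).
case: w => [|x [|y s]] //=.
rewrite IH /= eqxx andbT big_ord_recl /= !eqSS inE.
case: (x =P v) => [->|xv] /=; last by rewrite andbF.
case: (G v y) => /=; last by rewrite !mul0r andbT; case: (size s == L).
case: eqP => [sL|]; last by rewrite mulr0.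
rewrite andbT; congr (_ * _); apply: eq_bigr => i _.
have i2 : (i < size s)%N by rewrite sL.
have i1 : (i < size (y :: s))%N by rewrite ltnW.
by rewrite add0n (set_nth_default y v i2) (set_nth_default y v i1).
Qed.

Lemma Pr_holds_by n tau (G : rel 'I_n) t v w :
  (1 < n)%N -> (forall u, 0 < degree G u)%N -> (num_rounds n tau <= t)%N ->
  Pr walkA n tau t (holds_by walkA n tau G t v w) = rw_prob G (pow2_ceil tau) v w.
Proof.
move=> n_gt1 deg_gt0 Tt; set L := pow2_ceil tau; set M := n`!.
pose P := [pred F : {ffun 'I_n -> 'I_(rnd_range n tau).+1} | walk_seq G F v == w].
rewrite (@Pr_init_draws walkA n tau t P) => [|f]; last first.
  by rewrite holds_by_walk_seq // extend0 inE.
have -> : #|P| =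
  if (size w == L.+1) && (nth v w 0 == v) then
    \prod_(g < L) (next_digits G v w g * M ^ n.-1)%N else 0%N.
  case: ifP => w0; [rewrite -card_walk_event //; apply: eq_card|apply: eq_card0] => F.
    by rewrite !inE walk_seq_eqE; case/andP: w0 => -> ->.
  by rewrite !inE walk_seq_eqE; case: (size w == _) w0; case: (nth v w 0 == v).
have -> : #|{: {ffun 'I_n -> 'I_(rnd walkA n tau).+1}}| = (\prod_(g < L) M ^ n)%N.
  rewrite card_ffun !card_ord /= rnd_range_card card_ffun !card_ord.
  by rewrite prod_nat_const card_ord -!expnM mulnC.
rewrite rw_probE; case: ifP => _; last by rewrite mul0r.
rewrite !natr_prod -prodf_div; apply: eq_bigr => g _.
rewrite /next_digits; case: ifP => adj; last by rewrite mul0r.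
have M0 : (M%:R : RR) != 0 by rewrite pnatr_eq0 -lt0n fact_gt0.
have D0 : (degree G (nth v w g))%:R != 0 :> RR by rewrite pnatr_eq0 -lt0n deg_gt0.
have EM : (M%:R : RR) ^+ n = M%:R * M%:R ^+ n.-1 by rewrite -exprS prednK // ltnW.
rewrite natrM natr_div ?degree_dvd_fact ?unitfE // !natrX EM.
by field; rewrite D0 M0 expf_neq0.
Qed.

End WalkLaw.

(** * Round complexity *)

Lemma num_rounds_short n tau : 1 < tau -> pow2_ceil tau <= n.-1 ->
  num_rounds n tau = (up_log 2 tau).+1.*2.
Proof.
move=> t1 Ln; have tL := pow2_ceil_ge tau.
have B : block_len n tau = pow2_ceil tau by apply/minn_idPl.
have c1 : num_blocks n tau = 1.
  rewrite /num_blocks B -[X in X + _]mul1n divnMDl ?divn_small ?addn0 //; lia.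
rewrite /num_rounds ifF; last by apply/eqP; lia.
rewrite c1 mul1n /doubling_steps B; congr double; apply: up_log_eq => //.
by have := up_log_gt0 2 tau; rewrite t1 /pow2_ceil expnS => /prednK <-; lia.
Qed.

Lemma num_rounds_long n tau : 1 < n -> n.-1 < pow2_ceil tau ->
  let c := num_blocks n tau in let K := doubling_steps n tau in
  [/\ num_rounds n tau = c * K.*2, c * n <= 8 * tau, 0 < K & 2 ^ K.-1 < n].
Proof.
move=> n1 Ln c K.
have t0 : 0 < tau by case: (posnP tau) Ln => [->|//]; rewrite /pow2_ceil up_log0; lia.
have Lt := pow2_ceil_lt_double t0.
have B : block_len n tau = n.-1 by apply/minn_idPr; lia.
have KK : K = up_log 2 n by rewrite /K /doubling_steps B prednK //; lia.
split; first by rewrite /num_rounds ifF //; apply/eqP; lia.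
- rewrite /c /num_blocks B; have := leq_divM (pow2_ceil tau + n.-2) n.-1.
  have : (pow2_ceil tau + n.-2) %/ n.-1 * n <= 2 * ((pow2_ceil tau + n.-2) %/ n.-1 * n.-1).
    by rewrite mulnCA leq_mul2l; apply/orP; right; lia.
  lia.
- by rewrite KK up_log_gt0 n1.
- by rewrite KK up_log_gtn.
Qed.

Local Open Scope ring_scope.

Lemma ln2_gt0 : 0 < ln (2 : RR).
Proof. by apply: ln_gt0; lra. Qed.

Lemma ln2_mul_le_ln k m : (2 ^ k <= m)%N -> k%:R * ln (2 : RR) <= ln m%:R.
Proof.
move=> km; have m0 : (0 < m)%N by have := expn_gt0 2 k; lia.
rewrite mulr_natl -lnXn; last lra.
by rewrite -natrX ler_ln ?ler_nat // posrE ltr0n // expn_gt0.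
Qed.

Lemma ln2_le_ln m : (2 <= m)%N -> ln (2 : RR) <= ln m%:R.
Proof. by move/(@ln2_mul_le_ln 1); rewrite mul1r. Qed.

Lemma num_rounds_le_log n tau : (0 < tau)%N -> (pow2_ceil tau <= n.-1)%N ->
  (num_rounds n tau)%:R <= 6 / ln (2 : RR) * ln tau%:R.
Proof.
move=> t0 Ln; have l2 := ln2_gt0.
case: (ltnP 1 tau) => t1; last first.
  have -> : tau = 1%N by lia.
  by rewrite /num_rounds /pow2_ceil up_log1 /= ln1 mulr0.
rewrite num_rounds_short //.
have K0 : (0 < up_log 2 tau)%N by rewrite up_log_gt0.
have h1 := ln2_mul_le_ln (ltnW (up_log_gtn (isT : (1 < 2)%N) t1)).
have h2 := ln2_le_ln t1.
rewrite -(prednK K0) -[X in X.*2]addn1 -muln2 natrM natrD.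
set k := (up_log 2 tau).-1 in h1 *.
rewrite mulrAC ler_pdivlMr //; nra.
Qed.

Lemma num_rounds_le_blocks n tau : (1 < n)%N -> (n.-1 < pow2_ceil tau)%N ->
  (num_rounds n tau)%:R <=
  32 / ln (2 : RR) ^+ 2 * (tau%:R / n%:R * ln tau%:R * ln n%:R).
Proof.
move=> n1 Ln; have l2 := ln2_gt0.
have t1 : (1 < tau)%N.
  by case: tau Ln => [|[|tau]] //; rewrite /pow2_ceil ?up_log0 ?up_log1; lia.
have [-> cn K0 Kn] := num_rounds_long n1 Ln.
set c := num_blocks n tau in cn *; set K := doubling_steps n tau in K0 Kn *.
have h1 := ln2_mul_le_ln (ltnW Kn).
have h2 := ln2_le_ln t1.
have h3 := ln2_le_ln n1.
have n0 : (0 : RR) < n%:R by rewrite ltr0n; lia.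
have hc : c%:R * n%:R <= 8 * tau%:R :> RR by rewrite -natrM -(natrM _ 8) ler_nat.
rewrite -[K in (c * K.*2)%N](prednK K0) -muln2 !natrM.
set k := K.-1 in h1 *; set T := ln tau%:R in h2 *; set N := ln n%:R in h1 h3 *.
set l := ln (2 : RR) in l2 h1 h2 h3 *; set C := c%:R in hc *.
have C0 : 0 <= C by rewrite ler0n.
have hb : k.+1%:R * l <= 2 * N by rewrite -addn1 natrD mulrDl mul1r; lra.
have key : (C * n%:R) * (k.+1%:R * l) * l <= (8 * tau%:R) * (2 * N) * T.
  have Cn0 : 0 <= C * n%:R by rewrite mulr_ge0 ?ler0n.
  have kl0 : 0 <= k.+1%:R * l by rewrite mulr_ge0 ?ler0n //; lra.
  by apply: ler_pM; [rewrite mulr_ge0|lra|apply: ler_pM|lra].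
have E1 : C * (k.+1%:R * 2) = 2 * ((C * n%:R) * (k.+1%:R * l) * l) / (n%:R * l ^+ 2).
  by field; lra.
have E2 : 32 / l ^+ 2 * (tau%:R / n%:R * T * N) =
          2 * ((8 * tau%:R) * (2 * N) * T) / (n%:R * l ^+ 2) by field; lra.
by rewrite E1 E2 ler_wpM2r // ?invr_ge0 ?mulr_ge0 ?exprn_ge0 ?ler0n //; lra.
Qed.

Lemma num_rounds_le_long (a : RR) n tau : 0 < a -> (1 < n)%N -> (0 < tau)%N ->
  a * n%:R / ln n%:R <= tau%:R ->
  (num_rounds n tau)%:R <= (32 / ln (2 : RR) ^+ 2 + 6 / (a * ln 2)) *
                           (tau%:R / n%:R * ln tau%:R * ln n%:R).
Proof.
move=> a0 n1 t0 Ha; have l2 := ln2_gt0.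
have n0 : (0 : RR) < n%:R by rewrite ltr0n; lia.
have lnn : 0 < ln (n%:R : RR) by apply: ln_gt0; rewrite ltr1n.
have lnt : 0 <= ln (tau%:R : RR) by apply: ln_ge0; rewrite ler1n.
set l := ln (2 : RR) in l2 *; set N := ln (n%:R : RR) in lnn Ha *.
set T := ln (tau%:R : RR) in lnt *; set q := tau%:R / n%:R.
have q0 : 0 <= q by rewrite divr_ge0 ?ler0n.
have X0 : 0 <= q * T * N by rewrite !mulr_ge0 //; lra.
have aqN : a <= q * N by rewrite ler_pdivrMr // in Ha; rewrite /q mulrAC ler_pdivlMr.
have long0 : 0 <= 32 / l ^+ 2 * (q * T * N) by rewrite mulr_ge0 // divr_ge0 ?exprn_ge0; lra.
have short0 : 0 <= 6 / (a * l) * (q * T * N) by rewrite mulr_ge0 // divr_ge0 ?mulr_ge0; lra.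
rewrite mulrDl; case: (leqP (pow2_ceil tau) n.-1) => Ln; last first.
  by apply: le_trans (num_rounds_le_blocks n1 Ln) _; rewrite -/l -/T -/N -/q; lra.
apply: le_trans (num_rounds_le_log t0 Ln) _; rewrite -/l -/T.
suff : 6 / l * T <= 6 / (a * l) * (q * T * N) by lra.
have -> : 6 / (a * l) * (q * T * N) = 6 / l * T * (q * N / a) by field; lra.
have lT0 : 0 <= 6 / l * T by rewrite mulr_ge0 // divr_ge0; lra.
by rewrite ler_peMr // ler_pdivlMr // mul1r.
Qed.

Lemma num_rounds_le_short (a : RR) n tau : 0 < a ->
  (Num.Def.archi_bound (expR (2 * a)) <= n)%N -> (1 < n)%N -> (0 < tau)%N ->
  tau%:R <= a * n%:R / ln n%:R ->
  (num_rounds n tau)%:R <= 6 / ln (2 : RR) * ln tau%:R.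
Proof.
move=> a0 nbig n1 t0 Ha.
suff Ln : (pow2_ceil tau <= n.-1)%N by exact: num_rounds_le_log.
have n0 : (0 : RR) < n%:R by rewrite ltr0n; lia.
have lnn : 2 * a <= ln (n%:R : RR).
  have hb := archi_boundP (ltW (expR_gt0 (2 * a))); rewrite -(ler_nat RR) in nbig.
  by rewrite -{1}(expRK (2 * a)) ler_ln ?posrE ?expR_gt0 //; lra.
(* Otherwise [n < 2 tau <= 2 a n / ln n], contradicting [2 a <= ln n]. *)
rewrite leqNgt; apply/negP => Ln; have Lt := pow2_ceil_lt_double t0.
have n2t : (n%:R : RR) < tau%:R * 2 by rewrite -(natrM _ tau 2) ltr_nat muln2; lia.
rewrite ler_pdivlMr in Ha; last lra.
nra.
Qed.

Lemma Pr_terminated_whp n tau (G : rel 'I_n) (c : RR) : (1 < n)%N ->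
  1 - powR n%:R (- c) <=
  Pr walkA n tau (num_rounds n tau) (terminated_by walkA n tau G (num_rounds n tau)).
Proof.
move=> n1; rewrite Pr_certain => [|rho]; last exact: terminated_num_rounds.
by rewrite lerBlDr lerDl powR_ge0.
Qed.

Local Open Scope classical_set_scope.

Theorem mainTheorem2 :
  forall c : RR, 0 < c ->
  exists A : algorithm,
    (forall (n : nat) (G : rel 'I_n) (tau : nat),
        (2 <= n)%N -> simple_graph G -> connected_graph G -> (1 <= tau)%N ->
        forall (v : 'I_n) (w : seq 'I_n),
          (fun t : nat => Pr A n tau t (holds_by A n tau G t v w)) @ \oo -->
            rw_prob G (pow2_ceil tau) v w)
    /\
    (forall a : RR, 0 < a ->
      exists (C : RR) (n0 : nat), forall (n : nat) (G : rel 'I_n) (tau : nat),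
        (n0 <= n)%N -> (2 <= n)%N -> simple_graph G -> connected_graph G ->
        (1 <= tau)%N ->
        a * n%:R / ln n%:R <= tau%:R ->
        exists t : nat,
          t%:R <= C * (tau%:R / n%:R * ln tau%:R * ln n%:R) /\
          1 - powR n%:R (- c) <= Pr A n tau t (terminated_by A n tau G t))
    /\
    (forall a : RR, 0 < a ->
      exists (C : RR) (n0 : nat), forall (n : nat) (G : rel 'I_n) (tau : nat),
        (n0 <= n)%N -> (2 <= n)%N -> simple_graph G -> connected_graph G ->
        (1 <= tau)%N ->
        tau%:R <= a * n%:R / ln n%:R ->
        exists t : nat,
          t%:R <= C * ln tau%:R /\
          1 - powR n%:R (- c) <= Pr A n tau t (terminated_by A n tau G t)).
Proof.
move=> c _; exists walkA; split; [|split].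
- move=> n G tau n1 _ Gc _ v w.
  apply: cvg_trans (near_eq_cvg _) (cvg_cst (rw_prob G (pow2_ceil tau) v w)).
  apply: filterS (nbhs_infty_ge (num_rounds n tau)) => t Tt /=.
  by rewrite Pr_holds_by // => u; exact: connected_degree_gt0.
- move=> a a0; exists (32 / ln (2 : RR) ^+ 2 + 6 / (a * ln 2)), 0%N.
  move=> n G tau _ n1 _ _ t0 Ha; exists (num_rounds n tau).
  by split; [exact: num_rounds_le_long | exact: Pr_terminated_whp].
- move=> a a0; exists (6 / ln (2 : RR)), (Num.Def.archi_bound (expR (2 * a))).
  move=> n G tau nbig n1 _ _ t0 Ha; exists (num_rounds n tau).
  by split; [exact: num_rounds_le_short nbig n1 t0 Ha | exact: Pr_terminated_whp].
Qed.
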